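(* $B_4(n,d,w)$ equals the supremum of $\sum_{v\in F}x(\{v\})$ over all $x:\mathcal{C}_4\to\mathbb{R}$ with $x(\emptyset)=1$, $x(S)=0$ whenever $d_{\min}(S)<d$, $M_{3,D}(x)$ positive semidefinite for every $D\in\mathcal{C}_3$ with $|D|\le 1$, and $M_{4,D}(x)$ positive semidefinite for every $D\in\mathcal{C}_4$ with $|D|\in\{2,4\}$. Moreover, in both this program and the programs defining $A_4(n,d,w)$ and $B_4(n,d,w)$, every feasible $x$ satisfies $x(S)\ge 0$ for all $S\in\mathcal{C}_4$.
   Context: Notation: for a code $S\subseteq\{0,1\}^n$, $d_{\min}(S)$ is the minimum Hamming distance between distinct words of $S$ ($+\infty$ if $|S|\le 1$). Let $F\subseteq\{0,1\}^n$ be the set of words of weight $w$. $\mathcal{C}_k$ is the set of codes $C\subseteq F$ with $|C|\le k$. For $j\le k$ and $D\in\mathcal{C}_j$, $\mathcal{C}_j(D):=\{C\in\mathcal{C}_j : C\supseteq D,\ |D|+2|C\setminus D|\le j\}$. For $x:\mathcal{C}_k\to\mathbb{R}$, $M_{j,D}(x)$ is the $\mathcal{C}_j(D)\times\mathcal{C}_j(D)$ matrix with entries $x(C\cup C')$. $A_4(n,d,w)$ is the supremum of $\sum_{v\in F}x(\{v\})$ over all $x:\mathcal{C}_4\to\mathbb{R}$ with $x(\emptyset)=1$, $x(S)=0$ whenever $d_{\min}(S)<d$, and $M_{4,D}(x)$ positive semidefinite for every $D\in\mathcal{C}_4$. $B_4(n,d,w)$ is the supremum of $\sum_{v\in F}x(\{v\})$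 over all $x:\mathcal{C}_4\to\mathbb{R}$ with $x(\emptyset)=1$, $x(S)=0$ whenever $d_{\min}(S)<d$, $M_{3,D}(x)$ positive semidefinite for every $D\in\mathcal{C}_3$ with $|D|<2$, and $M_{4,D}(x)$ positive semidefinite for every $D\in\mathcal{C}_4$ with $|D|\ge 2$. *)

From HB Require Import structures.
From mathcomp Require Import all_boot all_order all_algebra.
Unset Implicit Arguments. Unset Printing Implicit Defensive.
Import Order.TTheory GRing.Theory Num.Theory.
Local Open Scope ring_scope.

(* A word of {0,1}^n is represented by its support, a subset of 'I_n.
   Hamming distance = size of the symmetric difference of supports;
   the weight of a word = size of its support. *)
Definition word (n : nat) := {set 'I_n}.
Definition code (n : nat) := {set word n}.

Definition hamming (n : nat) (u v : word n) : nat := #|(u :\: v) :|: (v :\: u)|.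

(* d_min(S) < d, with the convention d_min(S) = +infinity when |S| <= 1:
   there exist two distinct words of S at Hamming distance < d. *)
Definition dmin_lt (n : nat) (S : code n) (d : nat) : bool :=
  [exists u in S, exists v in S, (u != v) && (hamming n u v < d)%N].

Definition Fw (n w : nat) : code n := [set v : word n | #|v| == w].

Definition Ck (n w k : nat) : {set code n} :=
  [set C : code n | (C \subset Fw n w) && (#|C| <= k)%N].

Definition CjD (n w j : nat) (D : code n) : {set code n} :=
  [set C in Ck n w j | (D \subset C) && (#|D| + 2 * #|C :\: D| <= j)%N].

Definition Mjd (R : realFieldType) (n w j : nat) (D : code n) (x : code n -> R)
  : 'M[R]_#|CjD n w j D| :=
  \matrix_(i, k) x (enum_val i :|: enum_val k).

(* positive semidefinite (for the symmetric matrices considered here) *)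
Definition psd (R : realFieldType) (m : nat) (M : 'M[R]_m) : Prop :=
  forall v : 'cV[R]_m, 0 <= ((v^T *m M *m v) 0 0).

Definition objective (R : realFieldType) (n w : nat) (x : code n -> R) : R :=
  \sum_(v in Fw n w) x [set v].

Definition base_feasible (R : realFieldType) (n d w : nat) (x : code n -> R) : Prop :=
  x set0 = 1 /\ (forall S : code n, S \in Ck n w 4 -> dmin_lt n S d -> x S = 0).

Definition feasA (R : realFieldType) (n d w : nat) (x : code n -> R) : Prop :=
  base_feasible R n d w x /\
  (forall D : code n, D \in Ck n w 4 -> psd R _ (Mjd R n w 4 D x)).

Definition feasB (R : realFieldType) (n d w : nat) (x : code n -> R) : Prop :=
  base_feasible R n d w x /\
  (forall D : code n, D \in Ck n w 3 -> (#|D| < 2)%N -> psd R _ (Mjd R n w 3 D x)) /\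
  (forall D : code n, D \in Ck n w 4 -> (2 <= #|D|)%N -> psd R _ (Mjd R n w 4 D x)).

Definition feasB' (R : realFieldType) (n d w : nat) (x : code n -> R) : Prop :=
  base_feasible R n d w x /\
  (forall D : code n, D \in Ck n w 3 -> (#|D| <= 1)%N -> psd R _ (Mjd R n w 3 D x)) /\
  (forall D : code n, D \in Ck n w 4 -> (#|D| == 2)%N || (#|D| == 4)%N ->
     psd R _ (Mjd R n w 4 D x)).

(* Two maximization programs have the same supremum (in the extended reals)
   iff their objective values have exactly the same upper bounds. *)
Definition same_sup {R : realFieldType} {T : Type} (P Q : T -> Prop) (f : T -> R) : Prop :=
  forall b : R, (forall x, P x -> f x <= b) <-> (forall x, Q x -> f x <= b).

From HB Require Import structures.
From mathcomp Require Import all_boot all_order all_algebra zify.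
Import Order.TTheory GRing.Theory Num.Theory.
Set Implicit Arguments.
Unset Strict Implicit.

Local Open Scope ring_scope.

(** Every diagonal entry [x(C ∪ C) = x(C)] of a positive semidefinite
    moment matrix [M_{j,D}(x)] is nonnegative, so a feasible [x] is
    nonnegative on every code that indexes some constrained matrix.  A code
    [S] of [C_4] with [|S| >= 2] indexes [M_{4,D}] for some [D ⊆ S] with
    [|D| ∈ {2,4}] ([D = S], or [D = S \ {a}] when [|S| = 3]); singletons
    index [M_{3,S}] or [M_{4,S}].  Conversely, for [|D| = 3] the set
    [C_4(D)] is just [{D}], so [M_{4,D}(x)] is the [1 × 1] matrix [x(D)],
    which is positive semidefinite by the nonnegativity just proved: this is
    why the constraints with [|D| = 3] are redundant. *)

Section PsdMatrices.

Context {R : realFieldType}.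

Lemma psd_diag_ge0 m (M : 'M[R]_m) i : psd R m M -> 0 <= M i i.
Proof.
by move=> /(_ (delta_mx i 0)); rewrite trmx_delta -rowE -colE !mxE.
Qed.

Lemma psd_const_mx m (M : 'M[R]_m) c :
  0 <= c -> (forall i j, M i j = c) -> psd R m M.
Proof.
move=> c_ge0 Mc v.
have -> : (v^T *m M *m v) 0 0 = c * (\sum_j v j 0) ^+ 2.
  rewrite mxE expr2 mulrA mulr_sumr; apply: eq_bigr => k _.
  rewrite mxE mulr_sumr; congr (_ * _).
  by apply: eq_bigr => j _; rewrite !mxE Mc mulrC.
by rewrite mulr_ge0 // sqr_ge0.
Qed.

End PsdMatrices.

Section MomentMatrices.

Context {R : realFieldType} {n w : nat}.
Implicit Types (j k : nat) (C D S T : code n) (x : code n -> R).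

Lemma mem_CjD j D C :
  C \in Ck n w j -> D \subset C -> (#|D| + 2 * #|C :\: D| <= j)%N ->
  C \in CjD n w j D.
Proof. by move=> Cj DC Ccard; rewrite inE Cj DC. Qed.

Lemma CjD_self j S : S \in Ck n w j -> S \in CjD n w j S.
Proof.
move=> Sj; apply: mem_CjD; rewrite ?subxx // setDv cards0 addn0.
by move: Sj; rewrite inE => /andP[].
Qed.

Lemma Ck_subset j k S T :
  S \in Ck n w k -> T \subset S -> (#|T| <= j)%N -> T \in Ck n w j.
Proof.
rewrite !inE => /andP[SF _] TS Tj.
by rewrite (subset_trans TS SF).
Qed.

Lemma CjD_eq j D C : (j < #|D| + 2)%N -> C \in CjD n w j D -> C = D.
Proof.
move=> jD; rewrite inE => /and3P[_ DC Ccard].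
have CD0 : #|C :\: D| = 0%N.
  by apply/eqP; rewrite -leqn0 -(leq_add2l #|D|) addn0; lia.
apply/eqP; rewrite eq_sym eqEsubset DC /=.
by rewrite -setD_eq0 -cards_eq0 CD0.
Qed.

Lemma Mjd_psd_ge0 j D C x :
  C \in CjD n w j D -> psd R _ (Mjd R n w j D x) -> 0 <= x C.
Proof.
move=> CjDC /(psd_diag_ge0 (enum_rank_in CjDC C)).
by rewrite mxE enum_rankK_in // setUid.
Qed.

Lemma psd_Mjd_singleton j D x :
  (j < #|D| + 2)%N -> 0 <= x D -> psd R _ (Mjd R n w j D x).
Proof.
move=> jD xD_ge0; apply: (psd_const_mx xD_ge0) => i k.
by rewrite mxE !(CjD_eq jD (enum_valP _)) setUid.
Qed.

Lemma Ck4_ge0 x :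
  x set0 = 1 ->
  (forall S, S \in Ck n w 4 -> #|S| = 1%N -> 0 <= x S) ->
  (forall D, D \in Ck n w 4 -> (#|D| == 2)%N || (#|D| == 4)%N ->
     psd R _ (Mjd R n w 4 D x)) ->
  forall S, S \in Ck n w 4 -> 0 <= x S.
Proof.
move=> x0 x1_ge0 psd24 S S4.
have S_le4 : (#|S| <= 4)%N by move: S4; rewrite inE => /andP[].
have [S0 | S_gt1 | S1] := ltngtP #|S| 1; last exact: x1_ge0.
  by move: S0; rewrite ltnS leqn0 cards_eq0 => /eqP ->; rewrite x0 ler01.
have [S3 | S_ne3] := eqVneq #|S| 3%N.
- have /set0Pn[a aS] : S != set0 by rewrite -card_gt0 S3.
  have Sa2 : #|S :\ a| = 2%N by move: S3; rewrite (cardsD1 a) aS => -[].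
  apply: (@Mjd_psd_ge0 4 (S :\ a)).
    by apply: mem_CjD; rewrite ?subD1set // (cardsDS (subD1set S a)) S3 Sa2.
  by apply: psd24; rewrite ?Sa2 //; apply: (Ck_subset S4); rewrite ?subD1set ?Sa2.
- apply: (Mjd_psd_ge0 (CjD_self S4)); apply: psd24 => //.
  by move: S_gt1 S_le4 S_ne3; case: #|S| => [|[|[|[|[|]]]]].
Qed.

End MomentMatrices.

Lemma feasA_ge0 (R : realFieldType) n d w x :
  feasA R n d w x -> forall S, S \in Ck n w 4 -> 0 <= x S.
Proof.
move=> [[x0 _] psd4]; apply: Ck4_ge0 => [//|S S4 _|D D4 _]; last exact: psd4.
exact: Mjd_psd_ge0 (CjD_self S4) (psd4 _ S4).
Qed.

Lemma feasB'_ge0 (R : realFieldType) n d w x :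
  feasB' R n d w x -> forall S, S \in Ck n w 4 -> 0 <= x S.
Proof.
move=> [[x0 _] [psd3 psd4]]; apply: Ck4_ge0 => // S S4 S1.
have S3 : S \in Ck n w 3 by apply: (Ck_subset S4); rewrite ?S1.
by apply: Mjd_psd_ge0 (CjD_self S3) (psd3 _ S3 _); rewrite S1.
Qed.

Lemma feasB_feasB' (R : realFieldType) n d w x :
  feasB R n d w x <-> feasB' R n d w x.
Proof.
split=> [[base [psd3 psd4]] | feas].
  split=> //; split=> [D D3 D_le1 | D D4 D24]; first exact: psd3.
  by apply: psd4 => //; case/orP: D24 => /eqP ->.
have x_ge0 := feasB'_ge0 feas.
case: feas => [base [psd3 psd4]].
split=> //; split=> [D D3 D_lt2 | D D4 D_ge2]; first exact: psd3.
have D_le4 : (#|D| <= 4)%N by move: D4; rewrite inE => /andP[].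
have [D3 | D_ne3] := eqVneq #|D| 3%N.
  by apply: psd_Mjd_singleton; rewrite ?D3 // x_ge0.
by apply: psd4 => //; move: D_ge2 D_le4 D_ne3; case: #|D| => [|[|[|[|[|]]]]].
Qed.

Theorem mainTheorem6 (R : realFieldType) (n d w : nat) :
  same_sup (feasB R n d w) (feasB' R n d w) (objective R n w) /\
  (forall x : code n -> R, feasA R n d w x \/ feasB R n d w x \/ feasB' R n d w x ->
     forall S : code n, S \in Ck n w 4 -> 0 <= x S).
Proof.
split=> [b | x [/feasA_ge0 | [/feasB_feasB' /feasB'_ge0 | /feasB'_ge0]] //].
by split=> ub x /feasB_feasB' => [/ub | /ub].
Qed.
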